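(* Let $(G,E)$ be a self-similar group bundle and $E_{OS}$ an out-split of $E$ given by $OS=(\pi,\beta)$, with out-split self-similar groupoid action $(G_{OS},E_{OS})$. Then, for $\mu,\nu\in E^{-\infty}$, $\mu$ is asymptotically equivalent to $\nu$ relative to $(G,E)$ if and only if $I(\mu)$ is asymptotically equivalent to $I(\nu)$ relative to $(G_{OS},E_{OS})$. Consequently $(\tilde\sigma,\mathcal{J}_{G,E})$ is topologically conjugate to $(\tilde\sigma,\mathcal{J}_{G_{OS},E_{OS}})$.
   Context: Directed graph $E=(E^0,E^1,r,s)$; finite paths $\mu_1\cdots\mu_n$ with $s(\mu_i)=r(\mu_{i+1})$, $E^*$ all finite paths (vertices included), $vE^*$ paths with range $v$; $E^{-\infty}$ left-infinite paths $\cdots\mu_{-2}\mu_{-1}$ with product topology and shift $\sigma(\cdots\mu_{-2}\mu_{-1})=\cdots\mu_{-3}\mu_{-2}$. A self-similar groupoid action $(G,E)$: $G$ is a groupoid with unit space $E^0$, domain $d$ and codomain $c$, acting faithfully on $E^*$ so that each $g$ is a length-preserving bijection $d(g)E^*\to c(g)E^*$, and for each $g$ and $\mu\in d(g)E^*$ there is $g|_\mu\in G$ with $d(g|_\mu)=s(\mu)$ and $g\cdot(\mu\nu)=(g\cdot\mu)(g|_\mu\cdot\nu)$ for all $\nu\in s(\mu)E^*$. It is a self-similar group bundle if moreover $d(g)=c(g)$ for all $g$ (the action preserves ranges). Out-split: $OS=(\pi,\beta)$ with maps $\pi:E^1\to E^0_{OS}$, $\beta:E^0_{OS}\to E^0$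 satisfying $s=\beta\circ\pi$. The graph $E_{OS}$ has vertices $E^0_{OS}$, edges $E^1_{OS}=\{(v,e)\in E^0_{OS}\times E^1:\beta(v)=r(e)\}$, $r_{OS}(v,e)=v$, $s_{OS}(v,e)=\pi(e)$. $G_{OS}=\{(g,v)\in G\times E^0_{OS}: d(g)=c(g)=\beta(v)\}$ with $(g,v)(g',v)=(gg',v)$, acting by $(g,v)\cdot(v,e)=(v,g\cdot e)$ and $(g,v)|_{(v,e)}=(g|_e,\pi(e))$ (identifying $(g|_e,\pi(e))\in G_{OS}$); this is a self-similar groupoid action on $E_{OS}$. The map $I:E^{-\infty}\to E^{-\infty}_{OS}$ is $I(\cdots e_{-2}e_{-1})=\cdots(\pi(e_{-3}),e_{-2})(\pi(e_{-2}),e_{-1})$. Asymptotic equivalence relative to a self-similar groupoid $(G,E)$: $\mu\sim_{ae}\nu$ in $E^{-\infty}$ iff there are a finite set $F\subseteq G$ and $(g_n)_{n<0}\subseteq F$ with $d(g_n)=r(\mu_n)$ and $g_n\cdot\mu_n\cdots\mu_{-1}=\nu_n\cdots\nu_{-1}$ for all $n<0$. The limit space $\mathcal{J}_{G,E}=E^{-\infty}/\sim_{ae}$ with quotient topology, and $\tilde\sigma$ is the map induced by $\sigma$. *)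

From Stdlib Require Import List Arith.
Import ListNotations.
Set Implicit Arguments.

(*  acte g e : the action g . e on edges, rese g e : restriction g|_e. *)
(*  The action on finite paths mu_1 ... mu_n (a list, mu_1 at the      *)
(*  head, s(mu_i) = r(mu_(i+1))) is the extension determined by        *)
(*  self-similarity   g.(e mu) = (g.e)(g|_e . mu).                     *)

Fixpoint act_path (Gt Et : Type) (acte : Gt -> Et -> Et) (rese : Gt -> Et -> Gt)
  (g : Gt) (p : list Et) : list Et :=
  match p with
  | [] => []
  | e :: q => acte g e :: act_path acte rese (rese g e) q
  end.

(* finite path with range v (vertex paths correspond to [] ) *)
Fixpoint fin_path (Vt Et : Type) (isedge : Et -> Prop) (rg sc : Et -> Vt)
  (v : Vt) (p : list Et) : Prop :=
  match p with
  | [] => True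
  | e :: q => isedge e /\ rg e = v /\ fin_path isedge rg sc (sc e) q
  end.

(* Left-infinite paths  ... mu_(-2) mu_(-1)  are encoded as
   x : nat -> Et  with  x k = mu_(-(k+1)). *)
Definition linf_path (Vt Et : Type) (isedge : Et -> Prop) (rg sc : Et -> Vt)
  (x : nat -> Et) : Prop :=
  forall k, isedge (x k) /\ sc (x (S k)) = rg (x k).

(* the finite segment  mu_(-(k+1)) ... mu_(-1)  (mu_(-(k+1)) at the head) *)
Definition seg (Et : Type) (x : nat -> Et) (k : nat) : list Et :=
  rev (map x (seq 0 (S k))).

(* the shift  sigma(... mu_(-2) mu_(-1)) = ... mu_(-3) mu_(-2) *)
Definition shift (Et : Type) (x : nat -> Et) : nat -> Et := fun k => x (S k).

Definition asymp_equiv (Vt Et Gt : Type) (rg : Et -> Vt)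
  (inG : Gt -> Prop) (dom : Gt -> Vt)
  (acte : Gt -> Et -> Et) (rese : Gt -> Et -> Gt)
  (mu nu : nat -> Et) : Prop :=
  exists F : list Gt, (forall g, In g F -> inG g) /\
  exists gs : nat -> Gt, forall k,
    In (gs k) F /\ dom (gs k) = rg (mu k) /\
    act_path acte rese (gs k) (seg mu k) = seg nu k.

(* E^{-infty} carries the subspace topology of the product topology on
   Et^nat (Et discrete). *)
Definition path_open (Et : Type) (P : (nat -> Et) -> Prop)
  (U : (nat -> Et) -> Prop) : Prop :=
  forall x, P x -> U x ->
    exists n, forall y, P y -> (forall k, k < n -> y k = x k) -> U y.

Definition cls (Et : Type) (P : (nat -> Et) -> Prop)
  (R : (nat -> Et) -> (nat -> Et) -> Prop) (x : nat -> Et) : (nat -> Et) -> Prop :=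
  fun y => P y /\ R x y.

Definition limit_space (Et : Type) (P : (nat -> Et) -> Prop)
  (R : (nat -> Et) -> (nat -> Et) -> Prop) : ((nat -> Et) -> Prop) -> Prop :=
  fun A => exists x, P x /\ A = cls P R x.

Definition quot_open (Et : Type) (P : (nat -> Et) -> Prop)
  (R : (nat -> Et) -> (nat -> Et) -> Prop)
  (W : ((nat -> Et) -> Prop) -> Prop) : Prop :=
  (forall A, W A -> limit_space P R A) /\
  path_open P (fun x => P x /\ W (cls P R x)).

(* induced map  sigma~ [x] = [sigma x]  (union over representatives) *)
Definition tshift (Et : Type) (P : (nat -> Et) -> Prop)
  (R : (nat -> Et) -> (nat -> Et) -> Prop)
  (A : (nat -> Et) -> Prop) : (nat -> Et) -> Prop :=
  fun y => exists x, A x /\ cls P R (shift x) y.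

Definition top_conjugate (E1 E2 : Type)
  (P1 : (nat -> E1) -> Prop) (R1 : (nat -> E1) -> (nat -> E1) -> Prop)
  (P2 : (nat -> E2) -> Prop) (R2 : (nat -> E2) -> (nat -> E2) -> Prop) : Prop :=
  exists h : ((nat -> E1) -> Prop) -> ((nat -> E2) -> Prop),
    (forall A, limit_space P1 R1 A -> limit_space P2 R2 (h A)) /\
    (forall A B, limit_space P1 R1 A -> limit_space P1 R1 B -> h A = h B -> A = B) /\
    (forall C, limit_space P2 R2 C -> exists A, limit_space P1 R1 A /\ h A = C) /\
    (forall W, quot_open P2 R2 W ->
       quot_open P1 R1 (fun A => limit_space P1 R1 A /\ W (h A))) /\
    (forall W, quot_open P1 R1 W ->
       quot_open P2 R2 (fun C => exists A, W A /\ h A = C)) /\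
    (forall A, limit_space P1 R1 A -> h (tshift P1 R1 A) = tshift P2 R2 (h A)).

Definition self_similar_groupoid (V Ed G : Type) (r s : Ed -> V)
  (d c : G -> V) (gmul : G -> G -> G) (ginv : G -> G) (gid : V -> G)
  (act : G -> Ed -> Ed) (res : G -> Ed -> G) : Prop :=
  (forall v, d (gid v) = v /\ c (gid v) = v) /\
  (forall g h, d g = c h -> d (gmul g h) = d h /\ c (gmul g h) = c g) /\
  (forall g h k, d g = c h -> d h = c k -> gmul (gmul g h) k = gmul g (gmul h k)) /\
  (forall g, gmul (gid (c g)) g = g /\ gmul g (gid (d g)) = g) /\
  (forall g, d (ginv g) = c g /\ c (ginv g) = d g /\
             gmul (ginv g) g = gid (d g) /\ gmul g (ginv g) = gid (c g)) /\
  (forall g e, d g = r e -> r (act g e) = c g) /\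
  (forall g e, d g = r e -> d (res g e) = s e /\ c (res g e) = s (act g e)) /\
  (forall v e, r e = v -> act (gid v) e = e /\ res (gid v) e = gid (s e)) /\
  (forall g h e, d g = c h -> d h = r e ->
     act (gmul g h) e = act g (act h e) /\
     res (gmul g h) e = gmul (res g (act h e)) (res h e)) /\
  (forall g h, d g = d h -> c g = c h ->
     (forall p, fin_path (fun _ => True) r s (d g) p ->
        act_path act res g p = act_path act res h p) -> g = h).

Definition self_similar_group_bundle (V Ed G : Type) (r s : Ed -> V)
  (d c : G -> V) (gmul : G -> G -> G) (ginv : G -> G) (gid : V -> G)
  (act : G -> Ed -> Ed) (res : G -> Ed -> G) : Prop :=
  self_similar_groupoid r s d c gmul ginv gid act res /\ (forall g, d g = c g).

(* Out-split OS = (pi, beta), pi : Ed -> VOS, beta : VOS -> V, s = beta o pi. *)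
(* E_OS: vertices VOS, edges {(v,e) | beta v = r e} (predicate on VOS*Ed), *)
Section OutSplit.
Variables (V Ed G VOS : Type) (r : Ed -> V) (d c : G -> V)
  (act : G -> Ed -> Ed) (res : G -> Ed -> G) (pi : Ed -> VOS) (beta : VOS -> V).

Definition OS_edge (x : VOS * Ed) : Prop := beta (fst x) = r (snd x).
Definition OS_r (x : VOS * Ed) : VOS := fst x.
Definition OS_s (x : VOS * Ed) : VOS := pi (snd x).
Definition OS_G (x : G * VOS) : Prop := d (fst x) = beta (snd x) /\ c (fst x) = beta (snd x).
Definition OS_d (x : G * VOS) : VOS := snd x.
Definition OS_act (x : G * VOS) (y : VOS * Ed) : VOS * Ed := (snd x, act (fst x) (snd y)).
Definition OS_res (x : G * VOS) (y : VOS * Ed) : G * VOS := (res (fst x) (snd y), pi (snd y)).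

(* I(... e_(-2) e_(-1)) = ... (pi(e_(-3)), e_(-2)) (pi(e_(-2)), e_(-1)) *)
Definition OS_I (x : nat -> Ed) : nat -> VOS * Ed := fun k => (pi (x (S k)), x k).
End OutSplit.

From Stdlib Require Import List Lia Classical FunctionalExtensionality PropExtensionality.
Import ListNotations.

(* The map I only attaches to each edge e_n the vertex pi(e_(n-1)), so it is a
   shift-equivariant homeomorphism E^{-oo} -> E_OS^{-oo} whose inverse forgets
   these labels.  Since pi is invariant under the action, (g, v) acts on a lifted
   path as the lift of the action of g.  Hence if (g_n) witnesses mu ~ nu, then
   (g_n, pi(mu_(n-1))) witnesses I mu ~ I nu: it lies in G_OS because d = c in a
   group bundle, and it takes finitely many values because E_OS^0 is finite.
   Conversely, first coordinates of a witness for I mu ~ I nu witness mu ~ nu.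
   A homeomorphism that matches the two equivalence relations and commutes with
   the shift descends to a topological conjugacy of the limit spaces. *)

Lemma seg_S (Ed : Type) (x : nat -> Ed) (k : nat) : seg x (S k) = x (S k) :: seg x k.
Proof. unfold seg. rewrite (seq_S (S k)), map_app, rev_app_distr. reflexivity. Qed.

Lemma fin_path_seg (V Ed : Type) (isedge : Ed -> Prop) (r s : Ed -> V) (x : nat -> Ed) :
  linf_path isedge r s x -> forall k, fin_path isedge r s (r (x k)) (seg x k).
Proof.
  intros Hx k; induction k as [|k IHk]; simpl.
  - repeat split; apply Hx.
  - rewrite seg_S. simpl. destruct (Hx (S k)) as [He _]. destruct (Hx k) as [_ Hs].
    repeat split; [exact He | rewrite Hs; exact IHk].
Qed.

Lemma exists_filter_list {A : Type} (P : A -> Prop) (L : list A) :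
  exists L', forall x, In x L' <-> In x L /\ P x.
Proof.
  induction L as [|a L [L' IH]].
  - exists []. simpl. tauto.
  - destruct (classic (P a)) as [Ha|Ha]; [exists (a :: L') | exists L'];
      intro x; simpl; rewrite IH.
    + split; [intros [<-|H] | intros [[<-|H] HP]]; tauto.
    + split; [tauto | intros [[<-|H] HP]; tauto].
Qed.

Definition agree {T : Type} (n : nat) (x y : nat -> T) : Prop :=
  forall k, k < n -> x k = y k.

Definition unif_continuous_on {T U : Type} (P : (nat -> T) -> Prop)
  (f : (nat -> T) -> nat -> U) : Prop :=
  forall n, exists m, forall x y, P x -> P y -> agree m x y -> agree n (f x) (f y).

Section PathConjugacy.
Context {E1 E2 : Type}
  (P1 : (nat -> E1) -> Prop) (R1 : (nat -> E1) -> (nat -> E1) -> Prop)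
  (P2 : (nat -> E2) -> Prop) (R2 : (nat -> E2) -> (nat -> E2) -> Prop)
  (I : (nat -> E1) -> nat -> E2) (J : (nat -> E2) -> nat -> E1).

Hypothesis I_path : forall x, P1 x -> P2 (I x).
Hypothesis J_path : forall z, P2 z -> P1 (J z).
Hypothesis J_I : forall x, J (I x) = x.
Hypothesis I_J : forall z, P2 z -> I (J z) = z.
Hypothesis I_equiv : forall x y, P1 x -> P1 y -> (R1 x y <-> R2 (I x) (I y)).
Hypothesis I_cont : unif_continuous_on P1 I.
Hypothesis J_cont : unif_continuous_on P2 J.
Hypothesis shift_path : forall x, P1 x -> P1 (shift x).
Hypothesis I_shift : forall x, I (shift x) = shift (I x).

Definition class_map (A : (nat -> E1) -> Prop) : (nat -> E2) -> Prop :=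
  fun z => P2 z /\ A (J z).

Lemma class_map_cls x : P1 x -> class_map (cls P1 R1 x) = cls P2 R2 (I x).
Proof.
  intro Hx. apply functional_extensionality. intro z.
  apply propositional_extensionality. unfold class_map, cls. split.
  - intros [Hz [_ HR]]. split; [exact Hz|].
    rewrite <- (I_J _ Hz). apply I_equiv; auto.
  - intros [Hz HR]. repeat split; auto.
    apply I_equiv; auto. rewrite (I_J _ Hz). exact HR.
Qed.

Lemma class_map_limit_space A : limit_space P1 R1 A -> limit_space P2 R2 (class_map A).
Proof. intros [x [Hx ->]]. exists (I x). rewrite class_map_cls; auto. Qed.

Lemma class_map_subset A B :
  limit_space P1 R1 A -> class_map A = class_map B -> forall w, A w -> B w.
Proof.
  intros [x [Hx ->]] Heq w Hw.
  assert (HIw : class_map (cls P1 R1 x) (I w)).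
  { split; [apply I_path, Hw | rewrite J_I; exact Hw]. }
  rewrite Heq in HIw. destruct HIw as [_ HB]. rewrite J_I in HB. exact HB.
Qed.

Lemma class_map_inj A B :
  limit_space P1 R1 A -> limit_space P1 R1 B -> class_map A = class_map B -> A = B.
Proof.
  intros HA HB Heq. apply functional_extensionality. intro w.
  apply propositional_extensionality.
  split; apply class_map_subset; auto.
Qed.

Lemma class_map_surj C :
  limit_space P2 R2 C -> exists A, limit_space P1 R1 A /\ class_map A = C.
Proof.
  intros [z [Hz ->]]. exists (cls P1 R1 (J z)). split.
  - exists (J z). auto.
  - rewrite class_map_cls, I_J; auto.
Qed.

Lemma class_map_continuous W :
  quot_open P2 R2 W -> quot_open P1 R1 (fun A => limit_space P1 R1 A /\ W (class_map A)).
Proof.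
  intros [_ HW]. split; [intros A [HA _]; exact HA|].
  intros x Hx [_ [_ HWx]]. rewrite class_map_cls in HWx by exact Hx.
  destruct (HW (I x) (I_path _ Hx) (conj (I_path _ Hx) HWx)) as [n Hn].
  destruct (I_cont n) as [m Hm].
  exists m. intros y Hy Hxy. split; [exact Hy|]. split.
  - exists y. auto.
  - rewrite class_map_cls by exact Hy.
    apply (Hn _ (I_path _ Hy)). intros k Hk. symmetry. apply Hm; auto.
    intros j Hj. symmetry. apply Hxy, Hj.
Qed.

Lemma class_map_open W :
  quot_open P1 R1 W -> quot_open P2 R2 (fun C => exists A, W A /\ class_map A = C).
Proof.
  intros [HW1 HW2]. split.
  - intros C [A [HA <-]]. apply class_map_limit_space, HW1, HA.
  - intros z Hz [_ [A [HWA HA]]].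
    assert (Ecl : cls P1 R1 (J z) = A).
    { apply class_map_inj; [exists (J z); auto | apply HW1, HWA |].
      rewrite HA, class_map_cls, I_J; auto. }
    rewrite <- Ecl in HWA.
    destruct (HW2 (J z) (J_path _ Hz) (conj (J_path _ Hz) HWA)) as [n Hn].
    destruct (J_cont n) as [m Hm].
    exists m. intros y Hy Hzy. split; [exact Hy|].
    exists (cls P1 R1 (J y)). split.
    + apply (Hn _ (J_path _ Hy)). intros k Hk. symmetry. apply Hm; auto.
      intros j Hj. symmetry. apply Hzy, Hj.
    + rewrite class_map_cls, I_J; auto.
Qed.

Lemma class_map_tshift A :
  limit_space P1 R1 A -> class_map (tshift P1 R1 A) = tshift P2 R2 (class_map A).
Proof.
  intros [x [Hx ->]]. apply functional_extensionality. intro z.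
  apply propositional_extensionality. unfold class_map, tshift, cls. split.
  - intros [Hz [x' [[Hx' Rxx'] [_ Rs]]]]. exists (I x'). split.
    + rewrite J_I. auto.
    + split; [exact Hz|]. rewrite <- I_shift, <- (I_J _ Hz). apply I_equiv; auto.
  - intros [z' [[Hz' [_ Rxz']] [Hz Rs]]]. split; [exact Hz|].
    exists (J z'). repeat split; auto.
    apply I_equiv; auto. rewrite I_shift, !I_J; auto.
Qed.

Theorem top_conjugate_of_path_iso : top_conjugate P1 R1 P2 R2.
Proof.
  exists class_map.
  split; [exact class_map_limit_space|].
  split; [exact class_map_inj|].
  split; [exact class_map_surj|].
  split; [exact class_map_continuous|].
  split; [exact class_map_open|].
  exact class_map_tshift.
Qed.

End PathConjugacy.
Section Lift.
Context {Ed VOS : Type} (pi : Ed -> VOS).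

Fixpoint lift (w : VOS) (p : list Ed) : list (VOS * Ed) :=
  match p with
  | [] => []
  | e :: q => (w, e) :: lift (pi e) q
  end.

Lemma map_snd_lift w p : map snd (lift w p) = p.
Proof. revert w; induction p; intro w; simpl; f_equal; auto. Qed.

Lemma seg_OS_I (x : nat -> Ed) k : seg (OS_I pi x) k = lift (pi (x (S k))) (seg x k).
Proof. induction k as [|k IHk]; [reflexivity|]. rewrite !seg_S, IHk. reflexivity. Qed.

End Lift.

Definition OS_forget {Ed VOS : Type} (z : nat -> VOS * Ed) : nat -> Ed := fun k => snd (z k).

Section OutSplit.
Context {V Ed G VOS : Type} (r s : Ed -> V) (d c : G -> V)
  (act : G -> Ed -> Ed) (res : G -> Ed -> G) (pi : Ed -> VOS) (beta : VOS -> V).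

Local Notation path := (linf_path (fun _ => True) r s).
Local Notation OS_path := (linf_path (OS_edge r beta) (@OS_r Ed VOS) (OS_s pi)).
Local Notation ae := (asymp_equiv r (fun _ => True) d act res).
Local Notation OS_ae := (asymp_equiv (@OS_r Ed VOS) (OS_G d c beta) (@OS_d G VOS)
                          (OS_act act) (OS_res res pi)).

Hypothesis s_split : forall e, s e = beta (pi e).

Lemma linf_path_OS_I x : path x -> OS_path (OS_I pi x).
Proof.
  intros Hx k. split; [|reflexivity].
  unfold OS_edge, OS_I; simpl. rewrite <- s_split. apply Hx.
Qed.

Lemma linf_path_OS_forget z : OS_path z -> path (OS_forget z).
Proof.
  intros Hz k. split; [exact I|]. destruct (Hz k) as [He Hs].
  unfold OS_forget. rewrite s_split. exact (eq_trans (f_equal beta Hs) He).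
Qed.

Lemma OS_I_forget z : OS_path z -> OS_I pi (OS_forget z) = z.
Proof.
  intro Hz. apply functional_extensionality. intro k.
  destruct (Hz k) as [_ Hs]. unfold OS_I, OS_forget.
  unfold OS_s, OS_r in Hs. rewrite Hs. destruct (z k); reflexivity.
Qed.

Hypothesis res_dom : forall g e, d g = r e -> d (res g e) = s e.
Hypothesis pi_act : forall g e, d g = r e -> pi (act g e) = pi e.

Lemma act_path_OS_lift p g v w : fin_path (fun _ => True) r s (d g) p ->
  act_path (OS_act act) (OS_res res pi) (g, v) (lift pi w p)
  = lift pi v (act_path act res g p).
Proof.
  revert g v w; induction p as [|e q IH]; intros g v w Hp; [reflexivity|].
  destruct Hp as [_ [Hr Hq]]. simpl. unfold OS_act, OS_res; simpl.
  rewrite IH, pi_act; auto. rewrite res_dom; auto.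
Qed.

Lemma asymp_equiv_of_OS_I mu nu : path mu -> OS_ae (OS_I pi mu) (OS_I pi nu) -> ae mu nu.
Proof.
  intros Hmu [F [HF [gs Hgs]]].
  exists (map fst F). split; [auto|].
  exists (fun k => fst (gs k)). intro k.
  destruct (Hgs k) as [Hin [Hd Hact]].
  destruct (gs k) as [g v]. simpl.
  destruct (HF _ Hin) as [HG _]. simpl in HG, Hd.
  assert (Hdg : d g = r (mu k)).
  { unfold OS_d, OS_r, OS_I in Hd. simpl in Hd.
    rewrite HG, Hd, <- s_split. apply Hmu. }
  split; [|split].
  - apply in_map_iff. exists (g, v). auto.
  - exact Hdg.
  - rewrite !seg_OS_I, act_path_OS_lift in Hact.
    + apply (f_equal (map snd)) in Hact. rewrite !map_snd_lift in Hact. exact Hact.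
    + rewrite Hdg. apply fin_path_seg, Hmu.
Qed.

Hypothesis dom_cod : forall g, d g = c g.
Hypothesis VOS_finite : exists lO : list VOS, forall w, In w lO.

Lemma asymp_equiv_OS_I mu nu : path mu -> ae mu nu -> OS_ae (OS_I pi mu) (OS_I pi nu).
Proof.
  intros Hmu [F [_ [gs Hgs]]].
  destruct VOS_finite as [lO HlO].
  destruct (exists_filter_list (OS_G d c beta) (list_prod F lO)) as [F' HF'].
  exists F'. split; [intros x Hx; apply HF' in Hx; tauto|].
  exists (fun k => (gs k, pi (mu (S k)))). intro k.
  destruct (Hgs k) as [Hin [Hd Hact]].
  assert (Hpi : pi (mu (S k)) = pi (nu (S k))).
  { destruct (Hgs (S k)) as [_ [Hd1 Hact1]].
    rewrite !seg_S in Hact1. injection Hact1 as Hhead _.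
    rewrite <- Hhead. symmetry. apply pi_act, Hd1. }
  assert (Hdg : d (gs k) = beta (pi (mu (S k)))).
  { rewrite <- s_split, (proj2 (Hmu k)). exact Hd. }
  split; [|split].
  - apply HF'. split.
    + apply in_prod; auto.
    + unfold OS_G; simpl. rewrite <- dom_cod. auto.
  - reflexivity.
  - rewrite !seg_OS_I, act_path_OS_lift.
    + rewrite Hact, Hpi. reflexivity.
    + rewrite Hd. apply fin_path_seg, Hmu.
Qed.

Lemma asymp_equiv_OS_I_iff mu nu :
  path mu -> (ae mu nu <-> OS_ae (OS_I pi mu) (OS_I pi nu)).
Proof.
  intro Hmu. split; [apply asymp_equiv_OS_I | apply asymp_equiv_of_OS_I]; exact Hmu.
Qed.

Lemma top_conjugate_OS : top_conjugate path ae OS_path OS_ae.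
Proof.
  apply (top_conjugate_of_path_iso _ _ _ _ (OS_I pi) OS_forget).
  - exact linf_path_OS_I.
  - exact linf_path_OS_forget.
  - reflexivity.
  - exact OS_I_forget.
  - intros x y Hx _. apply asymp_equiv_OS_I_iff, Hx.
  - intro n. exists (S n). intros x y _ _ Hxy k Hk.
    unfold OS_I. rewrite !Hxy by lia. reflexivity.
  - intro n. exists n. intros z z' _ _ Hzz' k Hk.
    unfold OS_forget. rewrite Hzz' by exact Hk. reflexivity.
  - intros x Hx k. apply Hx.
  - reflexivity.
Qed.

End OutSplit.

Theorem theorem5p1 (V Ed G VOS : Type) (r s : Ed -> V)
  (d c : G -> V) (gmul : G -> G -> G) (ginv : G -> G) (gid : V -> G)
  (act : G -> Ed -> Ed) (res : G -> Ed -> G)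
  (pi : Ed -> VOS) (beta : VOS -> V)
  (HfinV : exists lV : list V, forall v, In v lV)
  (HfinE : exists lE : list Ed, forall e, In e lE)
  (HfinVOS : exists lO : list VOS, forall w, In w lO)
  (Hssg : self_similar_group_bundle r s d c gmul ginv gid act res)
  (Hos : forall e, s e = beta (pi e))
  (Hinv : forall g e, d g = r e -> pi (act g e) = pi e) :
  (forall mu nu : nat -> Ed,
     linf_path (fun _ => True) r s mu -> linf_path (fun _ => True) r s nu ->
     (asymp_equiv r (fun _ => True) d act res mu nu <->
      asymp_equiv (@OS_r Ed VOS) (OS_G d c beta) (@OS_d G VOS)
        (OS_act act) (OS_res res pi)
        (OS_I pi mu) (OS_I pi nu))) /\
  top_conjugate
    (linf_path (fun _ => True) r s)
    (asymp_equiv r (fun _ => True) d act res)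
    (linf_path (OS_edge r beta) (@OS_r Ed VOS) (OS_s pi))
    (asymp_equiv (@OS_r Ed VOS) (OS_G d c beta) (@OS_d G VOS)
        (OS_act act) (OS_res res pi)).
Proof.
  destruct Hssg as [[_ [_ [_ [_ [_ [_ [Hres _]]]]]]] Hdc].
  assert (res_dom : forall g e, d g = r e -> d (res g e) = s e)
    by (intros g e H; exact (proj1 (Hres g e H))).
  split.
  - intros mu nu Hmu _. apply (asymp_equiv_OS_I_iff r s); assumption.
  - apply (top_conjugate_OS r s); assumption.
Qed.
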